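(* Let $\mathcal{X},\mathcal{Y}$ be finite sets, $p(X,Y)$ a fully supported probability distribution on $\mathcal{X}\times\mathcal{Y}$, and $0\le\lambda\le I(X;Y)$. For $\kappa_{\mathcal{X}}\in C(\mathcal{X},\mathbb{N})$, $\kappa_{\mathcal{Y}}\in C(\mathcal{Y},\mathbb{N})$, let $\kappa=\kappa_{\mathcal{X}}\otimes\kappa_{\mathcal{Y}}\in C(\mathcal{X}\times\mathcal{Y},\mathbb{N}\times\mathbb{N})$, $\kappa(t_X,t_Y|x,y)=\kappa_{\mathcal{X}}(t_X|x)\kappa_{\mathcal{Y}}(t_Y|y)$, and let $q(x,y,t_X,t_Y)=p(x,y)\kappa_{\mathcal{X}}(t_X|x)\kappa_{\mathcal{Y}}(t_Y|y)$. Consider: (A) minimise $I_\kappa(X,Y;T)$, with $T=(T_X,T_Y)$, over all such split channels $\kappa=\kappa_{\mathcal{X}}\otimes\kappa_{\mathcal{Y}}$ subject to $D(\kappa(p(X,Y))\|\kappa(p(X)p(Y)))=\lambda$; (S) minimise $I_q(X;T_X)+I_q(Y;T_Y)$ over pairs $(q(T_X|X),q(T_Y|Y))=(\kappa_{\mathcal{X}},\kappa_{\mathcal{Y}})$ subject to $I_q(T_X;T_Y)\ge\lambda$. Then: (i) in (S), replacing the constraint $I_q(T_X;T_Y)\ge\lambda$ by $I_q(T_X;T_Y)=\lambda$ does not change the set of solutions; (ii) the sets of solutions of (A) and (S) are identical (identifying $\kappa_{\mathcal{X}}\otimes\kappa_{\mathcal{Y}}$ with the pair $(\kappa_{\ma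thcal{X}},\kappa_{\mathcal{Y}})$).
   Context: For sets $\mathcal{A},\mathcal{B}$, $C(\mathcal{A},\mathcal{B})$ denotes the set of channels (conditional probabilities) from $\mathcal{A}$ to $\mathcal{B}$. For a channel $\kappa$ and a distribution $r$ on its input space, $\kappa(r)$ denotes the output distribution $\sum_a\kappa(\cdot|a)r(a)$. $I_\kappa(X,Y;T)$ is computed from $p(x,y)\kappa(t|x,y)$; $D$ is the Kullback–Leibler divergence; $p(X),p(Y)$ are the marginals of $p(X,Y)$. *)

From HB Require Import structures.
From mathcomp Require Import all_boot all_order all_algebra.
From mathcomp Require Import all_classical all_reals all_analysis.
Set Implicit Arguments. Unset Strict Implicit. Unset Printing Implicit Defensive.
Import Order.TTheory GRing.Theory Num.Theory.
Local Open Scope classical_set_scope.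
Local Open Scope ring_scope.

Section InfoDefs.
Variable R : realType.

Definition csum (T : choiceType) (f : T -> R) : \bar R :=
  (\esum_(t in [set: T]) (fun u => (f u)%:E)^\+ t
   - \esum_(t in [set: T]) (fun u => (f u)%:E)^\- t)%E.

Definition is_channel (A : finType) (k : A -> nat -> R) : Prop :=
  (forall a t, 0 <= k a t) /\
  (forall a, (\esum_(t in [set: nat]) (k a t)%:E = 1)%E).

Definition chan_out (A : finType) (B : Type) (k : A -> B -> R) (r : A -> R)
  (b : B) : R := \sum_(a : A) k a b * r a.

Definition ktensor (X Y : finType) (kX : X -> nat -> R) (kY : Y -> nat -> R)
  : X * Y -> nat * nat -> R := fun xy t => kX xy.1 t.1 * kY xy.2 t.2.

Definition mi_chan (A : finType) (B : choiceType) (r : A -> R) (k : A -> B -> R)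
  : \bar R :=
  csum (fun ab : A * B =>
    r ab.1 * k ab.1 ab.2 * ln (r ab.1 * k ab.1 ab.2 / (r ab.1 * chan_out k r ab.2))).

Definition kl (B : choiceType) (a b : B -> R) : \bar R :=
  csum (fun t => a t * ln (a t / b t)).

Definition margX (X Y : finType) (p : X * Y -> R) (x : X) : R := \sum_(y : Y) p (x, y).
Definition margY (X Y : finType) (p : X * Y -> R) (y : Y) : R := \sum_(x : X) p (x, y).
Definition prodmarg (X Y : finType) (p : X * Y -> R) (xy : X * Y) : R :=
  margX p xy.1 * margY p xy.2.

Definition mutinf (X Y : finType) (p : X * Y -> R) : R :=
  \sum_(xy : X * Y) p xy * ln (p xy / prodmarg p xy).

Definition mi_TT (X Y : finType) (p : X * Y -> R) (kX : X -> nat -> R)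
  (kY : Y -> nat -> R) : \bar R :=
  let qT := chan_out (ktensor kX kY) p in
  let qTX := chan_out kX (margX p) in
  let qTY := chan_out kY (margY p) in
  csum (fun t : nat * nat => qT t * ln (qT t / (qTX t.1 * qTY t.2))).

Definition chpair (X Y : finType) : Type := ((X -> nat -> R) * (Y -> nat -> R))%type.

Definition feasA (X Y : finType) (p : X * Y -> R) (lam : R) (k : chpair X Y) : Prop :=
  is_channel k.1 /\ is_channel k.2 /\
  kl (chan_out (ktensor k.1 k.2) p) (chan_out (ktensor k.1 k.2) (prodmarg p)) = lam%:E.
Definition objA (X Y : finType) (p : X * Y -> R) (k : chpair X Y) : \bar R :=
  mi_chan p (ktensor k.1 k.2).

Definition feasS_ge (X Y : finType) (p : X * Y -> R) (lam : R) (k : chpair X Y) : Prop :=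
  is_channel k.1 /\ is_channel k.2 /\ (lam%:E <= mi_TT p k.1 k.2)%E.
Definition feasS_eq (X Y : finType) (p : X * Y -> R) (lam : R) (k : chpair X Y) : Prop :=
  is_channel k.1 /\ is_channel k.2 /\ mi_TT p k.1 k.2 = lam%:E.
Definition objS (X Y : finType) (p : X * Y -> R) (k : chpair X Y) : \bar R :=
  (mi_chan (margX p) k.1 + mi_chan (margY p) k.2)%E.

Definition is_argmin (P : Type) (feas : P -> Prop) (obj : P -> \bar R) (z : P) : Prop :=
  feas z /\ forall w, feas w -> (obj z <= obj w)%E.

End InfoDefs.

From mathcomp Require Import all_boot all_order all_algebra.
From mathcomp Require Import all_classical all_reals all_analysis.
From mathcomp Require Import ring lra.
Import Order.TTheory GRing.Theory Num.Theory.
Set Implicit Arguments. Unset Strict Implicit. Unset Printing Implicit Defensive.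
Local Open Scope ring_scope.

(* For a split channel the chain rule gives
     I(X,Y;T) = I(X;T_X) + I(Y;T_Y) - I(T_X;T_Y),
   and D(kappa(p(X,Y)) || kappa(p(X)p(Y))) = I(T_X;T_Y), because kappa maps
   p(X)p(Y) to the product of the output marginals.  So the feasible set of (A)
   is that of (S) with equality, on which the objective of (A) is the objective
   of (S) minus lambda: both problems have the same minimisers.
   For (i), follow both channels by an erasure channel that keeps its input with
   probability al.  This multiplies I(X;T_X) and I(Y;T_Y) by al, and
   I(T_X;T_Y) by al^2.  If I(T_X;T_Y) > lambda, then al = sqrt(lambda / I(T_X;T_Y)) < 1
   meets the constraint with equality and strictly decreases the objective,
   which is positive because it dominates I(T_X;T_Y) (Gibbs' inequality applied
   to the chain rule).  Hence a minimiser of (S) has I(T_X;T_Y) = lambda. *)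

Section LogFacts.
Variable R : realType.
Implicit Types u a b C : R.

Lemma ln_le_subr1 u : 0 < u -> ln u <= u - 1.
Proof. by move=> u0; have := @le_ln1Dx R (u - 1); rewrite (addrC 1) subrK; apply; lra. Qed.

Lemma subr_invr_le_ln u : 0 < u -> 1 - u^-1 <= ln u.
Proof.
move=> u0; have := @ln_le_subr1 u^-1; rewrite invr_gt0 => /(_ u0).
by rewrite lnV ?posrE //; lra.
Qed.

Lemma subr_le_xlnx a b : 0 <= a -> 0 <= b -> (0 < a -> 0 < b) -> a - b <= a * ln (a / b).
Proof.
move=> a0 b0 ab; have [->|a_neq0] := eqVneq a 0; first by rewrite mul0r sub0r oppr_le0.
have a_gt0 : 0 < a by rewrite lt0r a_neq0.
have := subr_invr_le_ln (divr_gt0 a_gt0 (ab a_gt0)); rewrite invf_div => h.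
have -> : a - b = a * (1 - b / a) by rewrite mulrBr mulr1 mulrCA divff ?mulr1.
by rewrite ler_wpM2l // ltW.
Qed.

Lemma normr_xlnx_le a b C : 0 <= a -> 0 <= b -> a <= C * b ->
  `|a * ln (a / b)| <= C * a + b.
Proof.
move=> a0 b0 abC; have [->|a_neq0] := eqVneq a 0; first by rewrite mul0r normr0 mulr0 add0r.
have a_gt0 : 0 < a by rewrite lt0r a_neq0.
have b_gt0 : 0 < b.
  rewrite lt0r b0 andbT; apply: contra_neq a_neq0 => b_eq0.
  by move: abC; rewrite b_eq0 mulr0; lra.
have C_gt0 : 0 < C.
  by rewrite -(pmulr_lgt0 _ b_gt0); apply: lt_le_trans abC.
have lower := subr_le_xlnx a0 b0 (fun=> b_gt0).
have upper : a * ln (a / b) <= a * C.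
  apply: le_trans (_ : a * (a / b - 1) <= _); first by rewrite ler_wpM2l ?ln_le_subr1 ?divr_gt0.
  by rewrite ler_wpM2l // lerBlDr ler_pdivrMr //; nra.
by rewrite ler_norml; apply/andP; split; nra.
Qed.

Lemma xlnx_div_scale (c x y : R) :
  c * x * ln (c * x / (c * y)) = c * (x * ln (x / y)).
Proof.
have [->|c_neq0] := eqVneq c 0; first by rewrite !mul0r.
by rewrite -mulf_div divff // mul1r mulrA.
Qed.

Lemma xlnx_divxx (c : R) : c * ln (c / c) = 0.
Proof.
have [->|c_neq0] := eqVneq c 0; first by rewrite mul0r.
by rewrite divff // ln1 mulr0.
Qed.

End LogFacts.

(** * Absolutely summable real families *)

Section RealSums.
Variables (R : realType) (T : choiceType).
Implicit Types (a b f g : T -> R).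

Lemma funrposBnegE f t : f^\+ t - f^\- t = f t.
Proof. by rewrite -[in RHS](funrposBneg f). Qed.

Definition esumr a : \bar R := \esum_(t in [set: T]) (a t)%:E.

Definition summabler f : Prop := (esumr (fun t => `|f t|%R) < +oo)%E.

(* Meaningful only for [summabler f]: [fine] sends an infinite part to 0. *)
Definition tsum f : R := fine (esumr f^\+) - fine (esumr f^\-).

Lemma esumr_ge0 a : (forall t, 0 <= a t) -> (0 <= esumr a)%E.
Proof. by move=> a0; apply: esum_ge0 => t _; rewrite lee_fin. Qed.

Lemma le_esumr a b : (forall t, a t <= b t) -> (esumr a <= esumr b)%E.
Proof. by move=> ab; apply: le_esum => t _; rewrite lee_fin. Qed.

Lemma esumrD a b : (forall t, 0 <= a t) -> (forall t, 0 <= b t) ->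
  esumr (fun t => a t + b t) = (esumr a + esumr b)%E.
Proof.
move=> a0 b0; rewrite /esumr -esumD; last 2 first.
- by move=> t _; rewrite lee_fin.
- by move=> t _; rewrite lee_fin.
by apply: eq_esum => t _; rewrite EFinD.
Qed.

Lemma esumrZ c a : 0 <= c -> (forall t, 0 <= a t) ->
  esumr (fun t => c * a t) = (c%:E * esumr a)%E.
Proof.
move=> c0 a0; rewrite /esumr /esum -ereal_supZl //; last first.
  by apply/set0P; exists 0%E, set0; [exact: fsets_set0 | rewrite fsbig_set0].
congr ereal_sup; apply/seteqP; split => x /=.
- move=> [A [finA _] <-]; exists (\sum_(i \in A) (a i)%:E)%E; first by exists A.
  by rewrite !fsumEFin // -EFinM fsbig_distrr.
- move=> [y [A [finA _] <-] <-]; exists A => //.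
  by rewrite !fsumEFin // -EFinM fsbig_distrr.
Qed.

Lemma summabler_le f g : (forall t, `|f t| <= `|g t|) -> summabler g -> summabler f.
Proof. by move=> fg; apply: le_lt_trans; apply: le_esumr. Qed.

Lemma summabler_ge0E a : (forall t, 0 <= a t) -> summabler a = (esumr a < +oo)%E.
Proof. by move=> a0; congr (_ < _)%E; apply: eq_esum => t _; rewrite ger0_norm. Qed.

Lemma esumr_fine a : (forall t, 0 <= a t) -> summabler a ->
  esumr a = (fine (esumr a))%:E.
Proof.
move=> a0; rewrite summabler_ge0E // => a_fin; rewrite fineK // ge0_fin_numE //.
exact: esumr_ge0.
Qed.

Lemma summabler_funrpos f : summabler f -> summabler f^\+.
Proof.
apply: summabler_le => t; rewrite ger0_norm ?funrpos_ge0 //.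
by rewrite /funrpos ge_max normr_ge0 ler_norm.
Qed.

Lemma summabler_funrneg f : summabler f -> summabler f^\-.
Proof.
apply: summabler_le => t; rewrite ger0_norm ?funrneg_ge0 //.
by rewrite /funrneg ge_max normr_ge0 -normrN ler_norm.
Qed.

Lemma summablerD f g : summabler f -> summabler g -> summabler (fun t => f t + g t).
Proof.
move=> sf sg; apply: le_lt_trans (_ : esumr (fun t => `|f t| + `|g t|)%R < +oo)%E.
  by apply: le_esumr => t; exact: ler_normD.
by rewrite esumrD // lte_add_pinfty.
Qed.

Lemma summablerN f : summabler f -> summabler (fun t => - f t).
Proof. by apply: summabler_le => t; rewrite normrN. Qed.

Lemma summablerB f g : summabler f -> summabler g -> summabler (fun t => f t - g t).
Proof. by move=> sf sg; apply: summablerD => //; apply: summablerN. Qed.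

Lemma summablerZ c f : summabler f -> summabler (fun t => c * f t).
Proof.
rewrite /summabler => sf.
rewrite (_ : (fun t => `|c * f t|) = fun t => `|c| * `|f t|); last first.
  by apply/funext => t; rewrite normrM.
by rewrite esumrZ // lte_mul_pinfty.
Qed.

Lemma summablerZr c f : summabler f -> summabler (fun t => f t * c).
Proof. by move=> /(summablerZ c); under eq_fun do rewrite mulrC. Qed.

Lemma summabler0 : summabler (fun _ => 0).
Proof. by rewrite /summabler /esumr esum1 // => t _; rewrite normr0. Qed.

Lemma summabler_sum (I : Type) (s : seq I) (F : I -> T -> R) :
  (forall i, summabler (F i)) -> summabler (fun t => \sum_(i <- s) F i t).
Proof.
move=> sF; elim: s => [|i s IHs].
  by under eq_fun do rewrite big_nil; exact: summabler0.
by under eq_fun do rewrite big_cons; exact: summablerD.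
Qed.

Lemma tsum_ge0E a : (forall t, 0 <= a t) -> tsum a = fine (esumr a).
Proof.
move=> a0; rewrite /tsum (_ : esumr a^\- = 0%E) ?subr0; last first.
  by rewrite /esumr esum1 // => t _; rewrite /funrneg max_r // oppr_le0.
by congr (fine (esumr _)); apply/funext => t; rewrite /funrpos max_l.
Qed.

Lemma tsum_posneg f : tsum f = tsum f^\+ - tsum f^\-.
Proof. by rewrite {1}/tsum !tsum_ge0E. Qed.

Lemma esumr_tsum a : (forall t, 0 <= a t) -> summabler a -> esumr a = (tsum a)%:E.
Proof. by move=> a0 sa; rewrite tsum_ge0E // -esumr_fine. Qed.

Lemma csum_tsum f : summabler f -> csum f = (tsum f)%:E.
Proof.
move=> sf; rewrite /csum /tsum EFinB.
have -> : (fun u => (f u)%:E)^\+%E = fun u => (f^\+ u)%:E.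
  by apply/funext => u; rewrite funeposE EFin_max.
have -> : (fun u => (f u)%:E)^\-%E = fun u => (f^\- u)%:E.
  by apply/funext => u; rewrite funenegE EFin_max.
by rewrite -(esumr_fine (funrpos_ge0 f) (summabler_funrpos sf))
  -(esumr_fine (funrneg_ge0 f) (summabler_funrneg sf)).
Qed.

Lemma eq_tsum f g : f =1 g -> tsum f = tsum g.
Proof. by move=> /funext ->. Qed.

Lemma tsumD_ge0 a b : (forall t, 0 <= a t) -> (forall t, 0 <= b t) ->
  summabler a -> summabler b -> tsum (fun t => a t + b t) = tsum a + tsum b.
Proof.
move=> a0 b0 sa sb; have := esumrD a0 b0.
rewrite (esumr_tsum a0 sa) (esumr_tsum b0 sb) esumr_tsum; first by case.
- by move=> t; rewrite addr_ge0.
- exact: summablerD.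
Qed.

Lemma tsumB_ge0 a b : (forall t, 0 <= a t) -> (forall t, 0 <= b t) ->
  summabler a -> summabler b -> tsum (fun t => a t - b t) = tsum a - tsum b.
Proof.
move=> a0 b0 sa sb; set h := fun t => a t - b t.
have sh : summabler h := summablerB sa sb.
have [sp sn] := (summabler_funrpos sh, summabler_funrneg sh).
have balance : tsum (fun t => h^\+ t + b t) = tsum (fun t => h^\- t + a t).
  by apply: eq_tsum => t; have := funrposBnegE h t; rewrite /h; lra.
rewrite (tsumD_ge0 (funrpos_ge0 h) b0 sp sb) (tsumD_ge0 (funrneg_ge0 h) a0 sn sa) in balance.
by rewrite -/h tsum_posneg; lra.
Qed.

Lemma tsumD f g : summabler f -> summabler g ->
  tsum (fun t => f t + g t) = tsum f + tsum g.
Proof.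
move=> sf sg.
have [spf snf] := (summabler_funrpos sf, summabler_funrneg sf).
have [spg sng] := (summabler_funrpos sg, summabler_funrneg sg).
rewrite (eq_tsum (g := fun t => (f^\+ t + g^\+ t) - (f^\- t + g^\- t))); last first.
  by move=> t; have := funrposBnegE f t; have := funrposBnegE g t; lra.
rewrite tsumB_ge0 ?tsumD_ge0 //; try exact: summablerD.
- by rewrite (tsum_posneg f) (tsum_posneg g); ring.
- by move=> t; rewrite addr_ge0.
- by move=> t; rewrite addr_ge0.
Qed.

Lemma tsumN f : tsum (fun t => - f t) = - tsum f.
Proof.
rewrite /tsum (_ : (fun t => - f t)^\- = f^\+) ?opprB //.
by apply/funext => t; rewrite /funrneg /funrpos opprK.
Qed.

Lemma tsumB f g : summabler f -> summabler g ->
  tsum (fun t => f t - g t) = tsum f - tsum g.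
Proof. by move=> sf sg; rewrite tsumD ?tsumN //; exact: summablerN. Qed.

Lemma tsumZ c f : summabler f -> tsum (fun t => c * f t) = c * tsum f.
Proof.
move=> sf; wlog c0 : c / 0 <= c.
  move=> Hc; have [|c_lt0] := lerP 0 c; first exact: Hc.
  rewrite (eq_tsum (g := fun t => - (- c * f t))); last by move=> t; rewrite mulNr opprK.
  by rewrite tsumN Hc ?oppr_ge0 ?ltW // mulNr opprK.
have [spf snf] := (summabler_funrpos sf, summabler_funrneg sf).
have scale_ge0 a : (forall t, 0 <= a t) -> summabler a ->
    tsum (fun t => c * a t) = c * tsum a.
  move=> a0 sa; apply: EFin_inj; rewrite EFinM -!esumr_tsum ?esumrZ //.
  - by move=> t; rewrite mulr_ge0.
  - exact: summablerZ.
rewrite (eq_tsum (g := fun t => c * f^\+ t - c * f^\- t)); last first.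
  by move=> t; rewrite -mulrBr funrposBnegE.
rewrite tsumB_ge0; try (by move=> t; rewrite mulr_ge0); try exact: summablerZ.
by rewrite !scale_ge0 // -mulrBr -tsum_posneg.
Qed.

Lemma tsumZr c f : summabler f -> tsum (fun t => f t * c) = tsum f * c.
Proof.
move=> sf; rewrite (eq_tsum (g := fun t => c * f t)) ?tsumZ 1?mulrC //.
by move=> t; rewrite mulrC.
Qed.

Lemma tsum_ge0 f : (forall t, 0 <= f t) -> 0 <= tsum f.
Proof. by move=> f0; rewrite tsum_ge0E // fine_ge0 // esumr_ge0. Qed.

Lemma ler_tsum f g : summabler f -> summabler g -> (forall t, f t <= g t) ->
  tsum f <= tsum g.
Proof.
move=> sf sg fg; rewrite -subr_ge0 -tsumB //.
by apply: tsum_ge0 => t; rewrite subr_ge0.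
Qed.

Lemma tsum_sum (I : Type) (s : seq I) (F : I -> T -> R) :
  (forall i, summabler (F i)) ->
  tsum (fun t => \sum_(i <- s) F i t) = \sum_(i <- s) tsum (F i).
Proof.
move=> sF; elim: s => [|i s IHs].
  rewrite big_nil (eq_tsum (g := fun=> 0)) => [|t]; last by rewrite big_nil.
  by rewrite tsum_ge0E // /esumr esum1.
rewrite big_cons (eq_tsum (g := fun t => F i t + \sum_(j <- s) F j t)) => [|t].
  by rewrite tsumD ?IHs //; exact: summabler_sum.
by rewrite big_cons.
Qed.

End RealSums.

Section ReindexProductFubini.
Variable R : realType.

Lemma esumr_reindex (T T' : choiceType) (e : T -> T') (h : T' -> R) :
  injective e -> (forall t', ~ range e t' -> h t' = 0) ->
  esumr h = esumr (fun t => h (e t)).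
Proof.
move=> e_inj h0; rewrite /esumr.
transitivity (\esum_(t' in range e) (h t')%:E).
  rewrite [RHS]esum_mkcond; apply: eq_esum => t' _.
  by case: ifPn => // /negP; rewrite inE => /h0 ->.
by apply: reindex_esum; apply: inj_bij => t1 t2 _ _; exact: e_inj.
Qed.

Lemma tsum_reindex (T T' : choiceType) (e : T -> T') (h : T' -> R) :
  injective e -> (forall t', ~ range e t' -> h t' = 0) ->
  tsum h = tsum (fun t => h (e t)).
Proof.
move=> e_inj h0; rewrite /tsum !(esumr_reindex e_inj) //.
- by move=> t' /h0; rewrite /funrneg => ->; rewrite oppr0 maxxx.
- by move=> t' /h0; rewrite /funrpos => ->; rewrite maxxx.
Qed.

Lemma esumr_prod (T1 T2 : choiceType) (u : T1 -> R) (v : T2 -> R) :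
  (forall t, 0 <= u t) -> (forall t, 0 <= v t) -> summabler u -> summabler v ->
  esumr (fun t : T1 * T2 => u t.1 * v t.2) = (tsum u * tsum v)%:E.
Proof.
move=> u0 v0 su sv; rewrite /esumr.
have -> : ([set: T1 * T2] = [set: T1] `*`` (fun=> [set: T2]))%classic.
  by apply/seteqP; split.
rewrite -(esum_esum (a := fun i j => (u i * v j)%:E)); last first.
  by move=> i j _ _; rewrite lee_fin mulr_ge0.
transitivity (esumr (fun i => tsum v * u i)).
  apply: eq_esum => i _; rewrite -/(esumr (fun j => u i * v j)) esumrZ //.
  by rewrite esumr_tsum // -EFinM mulrC.
by rewrite esumrZ ?tsum_ge0 // esumr_tsum // -EFinM mulrC.
Qed.

Lemma summabler_prod (T1 T2 : choiceType) (f : T1 -> R) (g : T2 -> R) :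
  summabler f -> summabler g -> summabler (fun t : T1 * T2 => f t.1 * g t.2).
Proof.
move=> sf sg; rewrite /summabler.
rewrite (_ : (fun t => _) = fun t : T1 * T2 => `|f t.1| * `|g t.2|); last first.
  by apply/funext => t; rewrite normrM.
have normr_summable h : summabler h -> summabler (fun t => `|h t|).
  by apply: summabler_le => t; rewrite normr_id.
by rewrite (esumr_prod (u := fun x => `|f x|) (v := fun y => `|g y|)) ?ltry //;
  exact: normr_summable.
Qed.

Lemma tsum_prod_ge0r (T1 T2 : choiceType) (f : T1 -> R) (v : T2 -> R) :
  (forall t, 0 <= v t) -> summabler f -> summabler v ->
  tsum (fun t : T1 * T2 => f t.1 * v t.2) = tsum f * tsum v.
Proof.
move=> v0 sf sv.
have [sp sn] := (summabler_funrpos sf, summabler_funrneg sf).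
rewrite (eq_tsum (g := fun t => f^\+ t.1 * v t.2 - f^\- t.1 * v t.2)); last first.
  by move=> t; rewrite -mulrBl funrposBnegE.
rewrite tsumB_ge0; try (by move=> t; rewrite mulr_ge0); try exact: summabler_prod.
apply: EFin_inj; rewrite EFinB -!esumr_tsum; try (by move=> t; rewrite mulr_ge0);
  try exact: summabler_prod.
by rewrite !esumr_prod // -EFinB -mulrBl -tsum_posneg.
Qed.

Lemma tsum_prod (T1 T2 : choiceType) (f : T1 -> R) (g : T2 -> R) :
  summabler f -> summabler g ->
  tsum (fun t : T1 * T2 => f t.1 * g t.2) = tsum f * tsum g.
Proof.
move=> sf sg; have [sp sn] := (summabler_funrpos sg, summabler_funrneg sg).
rewrite (eq_tsum (g := fun t => f t.1 * g^\+ t.2 - f t.1 * g^\- t.2)); last first.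
  by move=> t; rewrite -mulrBr funrposBnegE.
rewrite tsumB ?tsum_prod_ge0r //; try exact: summabler_prod.
by rewrite -mulrBr -tsum_posneg.
Qed.

Lemma esumr_fubini (A : finType) (B : choiceType) (G : A * B -> R) :
  (forall ab, 0 <= G ab) -> esumr G = (\sum_(a : A) esumr (fun b => G (a, b)))%E.
Proof.
move=> G0; rewrite /esumr.
transitivity (\esum_(ab in [set: A * B]) \sum_(a : A) (if a == ab.1 then G ab else 0)%:E)%E.
  by apply: eq_esum => ab _; rewrite sumEFin -big_mkcond /= big_pred1_eq.
rewrite esum_sum; last by move=> ab a _ _; case: ifP; rewrite lee_fin.
apply: eq_bigr => a _.
rewrite -/(esumr (fun ab : A * B => if a == ab.1 then G ab else 0)).
rewrite (esumr_reindex (e := fun b => (a, b))) => [|b1 b2 [] //|[a' b] Nab].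
  by apply: eq_esum => b _ /=; rewrite eqxx.
by case: eqP => // ea; case: Nab; exists b; rewrite ?ea.
Qed.

Lemma summabler_fubini (A : finType) (B : choiceType) (G : A * B -> R) :
  (forall a, summabler (fun b => G (a, b))) -> summabler G.
Proof.
move=> sG; rewrite /summabler (esumr_fubini (G := fun ab => `|G ab|)) //.
by apply: lte_sum_pinfty => a _; exact: sG.
Qed.

Lemma tsum_fubini (A : finType) (B : choiceType) (G : A * B -> R) :
  (forall a, summabler (fun b => G (a, b))) ->
  tsum G = \sum_(a : A) tsum (fun b => G (a, b)).
Proof.
move=> sG; have fubini_ge0 (H : A * B -> R) : (forall ab, 0 <= H ab) ->
    (forall a, summabler (fun b => H (a, b))) ->
    tsum H = \sum_(a : A) tsum (fun b => H (a, b)).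
  move=> H0 sH; apply: EFin_inj; rewrite -esumr_tsum //; last exact: summabler_fubini.
  by rewrite esumr_fubini // -sumEFin; apply: eq_bigr => a _; rewrite esumr_tsum.
rewrite tsum_posneg !fubini_ge0 -?sumrB //.
- by apply: eq_bigr => a _; rewrite [in RHS]tsum_posneg.
- by move=> a; exact: summabler_funrneg (sG a).
- by move=> a; exact: summabler_funrpos (sG a).
Qed.

End ReindexProductFubini.

(** * Channels and mutual information *)

Section RelativeEntropy.
Variables (R : realType) (T : choiceType).
Implicit Types (a b : T -> R).

Lemma summabler_xlnx a b (C : R) : (forall t, 0 <= a t) -> (forall t, 0 <= b t) ->
  (forall t, a t <= C * b t) -> summabler a -> summabler b ->
  summabler (fun t => a t * ln (a t / b t)).
Proof.
move=> a0 b0 abC sa sb; apply: (summabler_le (g := fun t => C * a t + b t)).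
  by move=> t; exact: le_trans (normr_xlnx_le (a0 t) (b0 t) (abC t)) (ler_norm _).
by apply: summablerD => //; exact: summablerZ.
Qed.

Lemma tsum_gibbs a b : (forall t, 0 <= a t) -> (forall t, 0 <= b t) ->
  (forall t, 0 < a t -> 0 < b t) -> summabler a -> summabler b ->
  summabler (fun t => a t * ln (a t / b t)) ->
  tsum a - tsum b <= tsum (fun t => a t * ln (a t / b t)).
Proof.
move=> a0 b0 ab sa sb sab; rewrite -tsumB //.
apply: ler_tsum => // [|t]; first exact: summablerB.
exact: subr_le_xlnx (a0 t) (b0 t) (ab t).
Qed.

End RelativeEntropy.

Section Channels.
Variable R : realType.

(* For [B = nat] this is [is_channel k], by conversion. *)
Definition channel (A : finType) (B : choiceType) (k : A -> B -> R) : Prop :=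
  (forall a b, 0 <= k a b) /\ (forall a, esumr (k a) = 1%E).

Definition mi_summand (A : finType) (B : choiceType) (r : A -> R) (k : A -> B -> R)
  (ab : A * B) : R :=
  r ab.1 * k ab.1 ab.2 * ln (r ab.1 * k ab.1 ab.2 / (r ab.1 * chan_out k r ab.2)).

Definition mi_chanr (A : finType) (B : choiceType) (r : A -> R) (k : A -> B -> R) : R :=
  tsum (mi_summand r k).

Variables (A : finType) (B : choiceType) (k : A -> B -> R) (r : A -> R).
Hypothesis k_channel : channel k.
Hypothesis r_gt0 : forall a, 0 < r a.

Lemma channel_ge0 a b : 0 <= k a b.
Proof. exact: k_channel.1. Qed.

Lemma channel_summable a : summabler (k a).
Proof. by rewrite summabler_ge0E ?k_channel.2 ?ltry //; exact: channel_ge0. Qed.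

Lemma channel_tsum a : tsum (k a) = 1.
Proof.
apply: EFin_inj; rewrite -esumr_tsum ?k_channel.2 //.
- exact: channel_ge0.
- exact: channel_summable.
Qed.

Lemma chan_out_ge0 b : 0 <= chan_out k r b.
Proof. by apply: sumr_ge0 => a _; rewrite mulr_ge0 ?channel_ge0 ?ltW. Qed.

Lemma chan_out_ge a b : k a b * r a <= chan_out k r b.
Proof.
rewrite /chan_out (bigD1 a) //= lerDl.
by apply: sumr_ge0 => a' _; rewrite mulr_ge0 ?channel_ge0 ?ltW.
Qed.

Lemma summabler_chan_out : summabler (chan_out k r).
Proof.
by apply: summabler_sum => a; apply: summablerZr; exact: channel_summable.
Qed.

Lemma tsum_chan_out : tsum (chan_out k r) = \sum_a r a.
Proof.
rewrite tsum_sum => [|a]; last by apply: summablerZr; exact: channel_summable.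
by apply: eq_bigr => a _; rewrite tsumZr ?channel_tsum ?mul1r //; exact: channel_summable.
Qed.

Lemma mi_summandE a b :
  mi_summand r k (a, b) = r a * (k a b * ln (k a b / chan_out k r b)).
Proof. by rewrite /mi_summand /= -mulf_div divff ?gt_eqF // mul1r mulrA. Qed.

Lemma summabler_kl a : summabler (fun b => k a b * ln (k a b / chan_out k r b)).
Proof.
apply: (summabler_xlnx (C := (r a)^-1)) => [b|b|b||].
- exact: channel_ge0.
- exact: chan_out_ge0.
- by rewrite mulrC ler_pdivlMr // chan_out_ge.
- exact: channel_summable.
- exact: summabler_chan_out.
Qed.

Lemma summabler_mi_summand : summabler (mi_summand r k).
Proof.
apply: summabler_fubini => a; under eq_fun do rewrite mi_summandE.
by apply: summablerZ; exact: summabler_kl.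
Qed.

Lemma mi_chan_fin : mi_chan r k = (mi_chanr r k)%:E.
Proof. exact: csum_tsum summabler_mi_summand. Qed.

Lemma mi_chanrE :
  mi_chanr r k = \sum_a r a * tsum (fun b => k a b * ln (k a b / chan_out k r b)).
Proof.
rewrite /mi_chanr tsum_fubini => [|a]; last first.
  by under eq_fun do rewrite mi_summandE; apply: summablerZ; exact: summabler_kl.
apply: eq_bigr => a _; rewrite -tsumZ; last exact: summabler_kl.
by apply: eq_tsum => b; rewrite mi_summandE.
Qed.

Lemma mi_chanr_ge0 : \sum_a r a = 1 -> 0 <= mi_chanr r k.
Proof.
move=> r1; rewrite mi_chanrE; apply: sumr_ge0 => a _; apply: mulr_ge0; first exact: ltW.
have out_gt0 b : 0 < k a b -> 0 < chan_out k r b.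
  by move=> k_gt0; apply: lt_le_trans (chan_out_ge a b); rewrite mulr_gt0.
have := tsum_gibbs (channel_ge0 a) chan_out_ge0 out_gt0 (channel_summable a)
  summabler_chan_out (summabler_kl a).
by rewrite channel_tsum tsum_chan_out r1 subrr; apply.
Qed.

End Channels.

Section SplitChannel.
Variables (R : realType) (X Y : finType) (p : X * Y -> R).
Variables (kX : X -> nat -> R) (kY : Y -> nat -> R).

Local Notation qX := (chan_out kX (margX p)).
Local Notation qY := (chan_out kY (margY p)).
Local Notation K := (ktensor kX kY).
Local Notation qT := (chan_out (ktensor kX kY) p).

Definition mi_TT_summand (t : nat * nat) : R := qT t * ln (qT t / (qX t.1 * qY t.2)).

Definition mi_TTr : R := tsum mi_TT_summand.

Hypothesis p_gt0 : forall xy, 0 < p xy.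
Hypothesis p_sum1 : \sum_xy p xy = 1.
Hypothesis kX_channel : channel kX.
Hypothesis kY_channel : channel kY.

Let p_ge0 xy : 0 <= p xy. Proof. exact: ltW. Qed.

Lemma sum_margX : \sum_x margX p x = 1.
Proof. by rewrite /margX pair_bigA /= -p_sum1; apply: eq_bigr => -[]. Qed.

Lemma sum_margY : \sum_y margY p y = 1.
Proof. by rewrite /margY exchange_big pair_bigA /= -p_sum1; apply: eq_bigr => -[]. Qed.

Lemma margX_gt0 x : 0 < margX p x.
Proof.
case: (pickP (@predT Y)) => [y _|Y0].
  by apply: lt_le_trans (p_gt0 (x, y)) _; rewrite /margX (bigD1 y) //= lerDl sumr_ge0.
by move: p_sum1; rewrite big1 => [/eqP|[? y]]; [rewrite eq_sym oner_eq0 | have := Y0 y].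
Qed.

Lemma margY_gt0 y : 0 < margY p y.
Proof.
case: (pickP (@predT X)) => [x _|X0].
  by apply: lt_le_trans (p_gt0 (x, y)) _; rewrite /margY (bigD1 x) //= lerDl sumr_ge0.
by move: p_sum1; rewrite big1 => [/eqP|[x ?]]; [rewrite eq_sym oner_eq0 | have := X0 x].
Qed.

Lemma sum_margXE (F : X -> R) : \sum_xy p xy * F xy.1 = \sum_x margX p x * F x.
Proof.
transitivity (\sum_xy p (xy.1, xy.2) * F xy.1); first by apply: eq_bigr => -[].
rewrite -(pair_bigA _ (fun x y => p (x, y) * F x)) /=.
by apply: eq_bigr => x _; rewrite /margX mulr_suml.
Qed.

Lemma sum_margYE (G : Y -> R) : \sum_xy p xy * G xy.2 = \sum_y margY p y * G y.
Proof.
transitivity (\sum_xy p (xy.1, xy.2) * G xy.2); first by apply: eq_bigr => -[].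
rewrite -(pair_bigA _ (fun x y => p (x, y) * G y)) /= exchange_big /=.
by apply: eq_bigr => y _; rewrite /margY mulr_suml.
Qed.

Lemma channel_ktensor : channel K.
Proof.
split=> [xy t|xy]; first by rewrite /ktensor mulr_ge0 ?channel_ge0.
rewrite /ktensor (esumr_prod (u := kX xy.1) (v := kY xy.2)); try exact: channel_ge0;
  try exact: channel_summable.
by rewrite !channel_tsum ?mulr1.
Qed.

Lemma chan_out_ktensor_prodmarg t : chan_out K (prodmarg p) t = qX t.1 * qY t.2.
Proof.
rewrite /chan_out /ktensor /prodmarg mulr_suml.
rewrite -(pair_bigA _ (fun x y => kX x t.1 * kY y t.2 * (margX p x * margY p y))) /=.
by apply: eq_bigr => x _; rewrite mulr_sumr; apply: eq_bigr => y _; ring.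
Qed.

Lemma summabler_mi_TT_summand : summabler mi_TT_summand.
Proof.
pose C := \sum_xy p xy / (margX p xy.1 * margY p xy.2).
have marg_gt0 xy : 0 < margX p xy.1 * margY p xy.2 by rewrite mulr_gt0 ?margX_gt0 ?margY_gt0.
have p_le xy : p xy <= C * (margX p xy.1 * margY p xy.2).
  rewrite -ler_pdivrMr // /C (bigD1 xy) //= lerDl; apply: sumr_ge0 => xy' _.
  by rewrite divr_ge0 ?ltW.
apply: (summabler_xlnx (C := C)).
- exact: chan_out_ge0 channel_ktensor p_gt0.
- by move=> t; rewrite mulr_ge0 // (chan_out_ge0 _ margX_gt0, chan_out_ge0 _ margY_gt0).
- move=> t; rewrite -chan_out_ktensor_prodmarg /chan_out mulr_sumr.
  apply: ler_sum => xy _; rewrite mulrCA.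
  by apply: ler_wpM2l; [exact: (channel_ge0 channel_ktensor) | exact: p_le].
- exact: summabler_chan_out channel_ktensor.
- apply: (summabler_prod (f := qX) (g := qY)); exact: summabler_chan_out.
Qed.

Lemma mi_TT_fin : mi_TT p kX kY = mi_TTr%:E.
Proof. exact: csum_tsum summabler_mi_TT_summand. Qed.

Local Notation klX x t := (kX x t * ln (kX x t / qX t)).
Local Notation klY y t := (kY y t * ln (kY y t / qY t)).
Local Notation pmiT t := (ln (qT t / (qX t.1 * qY t.2))).

Lemma mi_summand_ktensor xy t : mi_summand p K (xy, t) =
  p xy * klX xy.1 t.1 * kY xy.2 t.2 + kX xy.1 t.1 * (p xy * klY xy.2 t.2)
  - p xy * K xy t * pmiT t.
Proof.
rewrite (mi_summandE K p_gt0) /ktensor.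
have [->|kX_neq0] := eqVneq (kX xy.1 t.1) 0; first by rewrite !(mul0r, mulr0, subr0, add0r).
have [->|kY_neq0] := eqVneq (kY xy.2 t.2) 0; first by rewrite !(mul0r, mulr0, subr0, addr0).
have kX_gt0 : 0 < kX xy.1 t.1 by rewrite lt0r kX_neq0 channel_ge0.
have kY_gt0 : 0 < kY xy.2 t.2 by rewrite lt0r kY_neq0 channel_ge0.
have qX_gt0 : 0 < qX t.1.
  by apply: lt_le_trans (chan_out_ge kX_channel margX_gt0 xy.1 _); rewrite mulr_gt0 ?margX_gt0.
have qY_gt0 : 0 < qY t.2.
  by apply: lt_le_trans (chan_out_ge kY_channel margY_gt0 xy.2 _); rewrite mulr_gt0 ?margY_gt0.
have qT_gt0 : 0 < qT t.
  apply: lt_le_trans (chan_out_ge channel_ktensor p_gt0 xy t).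
  by rewrite /ktensor !mulr_gt0.
have -> : kX xy.1 t.1 * kY xy.2 t.2 / qT t =
    kX xy.1 t.1 / qX t.1 * (kY xy.2 t.2 / qY t.2) / (qT t / (qX t.1 * qY t.2)).
  by field; rewrite !gt_eqF.
rewrite ln_div ?lnM ?posrE ?divr_gt0 ?mulr_gt0 ?invr_gt0 ?mulr_gt0 //; ring.
Qed.

Lemma summabler_termX xy : summabler (fun t => p xy * klX xy.1 t.1 * kY xy.2 t.2).
Proof.
apply: (summabler_prod (f := fun t1 => p xy * klX xy.1 t1)); last exact: channel_summable.
by apply: summablerZ; exact: summabler_kl margX_gt0 _.
Qed.

Lemma summabler_termY xy : summabler (fun t => kX xy.1 t.1 * (p xy * klY xy.2 t.2)).
Proof.
apply: (summabler_prod (g := fun t2 => p xy * klY xy.2 t2)); first exact: channel_summable.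
by apply: summablerZ; exact: summabler_kl margY_gt0 _.
Qed.

Lemma summabler_termT xy : summabler (fun t => p xy * K xy t * pmiT t).
Proof.
apply: summabler_le summabler_mi_TT_summand => t.
have pK_ge0 : 0 <= p xy * K xy t by rewrite mulr_ge0 // (channel_ge0 channel_ktensor).
have pK_le : p xy * K xy t <= qT t by rewrite mulrC (chan_out_ge channel_ktensor p_gt0).
rewrite /mi_TT_summand normrM [leRHS]normrM ler_wpM2r // (ger0_norm pK_ge0).
by rewrite ger0_norm // (le_trans pK_ge0 pK_le).
Qed.

Lemma tsum_termX : tsum (fun z : (X * Y) * (nat * nat) =>
  p z.1 * klX z.1.1 z.2.1 * kY z.1.2 z.2.2) = mi_chanr (margX p) kX.
Proof.
rewrite tsum_fubini; last exact: summabler_termX.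
rewrite (mi_chanrE kX_channel margX_gt0) -sum_margXE; apply: eq_bigr => xy _ /=.
have sf : summabler (fun t1 => p xy * klX xy.1 t1).
  by apply: summablerZ; exact: summabler_kl margX_gt0 _.
have /= -> := tsum_prod sf (channel_summable kY_channel xy.2).
by rewrite channel_tsum // mulr1 tsumZ //; exact: summabler_kl margX_gt0 _.
Qed.

Lemma tsum_termY : tsum (fun z : (X * Y) * (nat * nat) =>
  kX z.1.1 z.2.1 * (p z.1 * klY z.1.2 z.2.2)) = mi_chanr (margY p) kY.
Proof.
rewrite tsum_fubini; last exact: summabler_termY.
rewrite (mi_chanrE kY_channel margY_gt0) -sum_margYE; apply: eq_bigr => xy _ /=.
have sg : summabler (fun t2 => p xy * klY xy.2 t2).
  by apply: summablerZ; exact: summabler_kl margY_gt0 _.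
have /= -> := tsum_prod (channel_summable kX_channel xy.1) sg.
by rewrite channel_tsum // mul1r tsumZ //; exact: summabler_kl margY_gt0 _.
Qed.

Lemma tsum_termT :
  tsum (fun z : (X * Y) * (nat * nat) => p z.1 * K z.1 z.2 * pmiT z.2) = mi_TTr.
Proof.
rewrite tsum_fubini; last exact: summabler_termT.
rewrite -tsum_sum; last exact: summabler_termT.
apply: eq_tsum => t; rewrite /mi_TT_summand /chan_out mulr_suml.
by apply: eq_bigr => xy _; rewrite [p xy * _]mulrC.
Qed.

Lemma mi_chanr_ktensor :
  mi_chanr p K = mi_chanr (margX p) kX + mi_chanr (margY p) kY - mi_TTr.
Proof.
rewrite -tsum_termX -tsum_termY -tsum_termT -tsumD -?tsumB /mi_chanr.
- by apply: eq_tsum => -[xy t]; rewrite mi_summand_ktensor.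
- apply: summablerD; apply: summabler_fubini.
  + exact: summabler_termX.
  + exact: summabler_termY.
- by apply: summabler_fubini; exact: summabler_termT.
- by apply: summabler_fubini; exact: summabler_termX.
- by apply: summabler_fubini; exact: summabler_termY.
Qed.

Lemma mi_TTr_le : mi_TTr <= mi_chanr (margX p) kX + mi_chanr (margY p) kY.
Proof.
by rewrite -subr_ge0 -mi_chanr_ktensor; exact: mi_chanr_ge0 channel_ktensor p_gt0 p_sum1.
Qed.

End SplitChannel.

(** * Erasure channels *)

Section Erasure.
Variable R : realType.

Definition erasure (A : Type) (al : R) (k : A -> nat -> R) : A -> nat -> R :=
  fun a t => if t is t'.+1 then al * k a t' else 1 - al.

Variables (A : finType) (al : R) (k : A -> nat -> R).
Hypotheses (al_ge0 : 0 <= al) (al_le1 : al <= 1).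
Hypothesis k_channel : channel k.

Lemma channel_erasure : channel (erasure al k).
Proof.
split=> [a [|t] /=|a]; [by rewrite subr_ge0 | by rewrite mulr_ge0 ?(channel_ge0 k_channel) |].
pose erased t := if t is 0 then 1 - al else 0.
pose kept t := if t is t'.+1 then al * k a t' else 0.
have erased_ge0 t : 0 <= erased t by case: t => //=; rewrite subr_ge0.
have kept_ge0 t : 0 <= kept t by case: t => //= t; rewrite mulr_ge0 ?(channel_ge0 k_channel).
have -> : erasure al k a = fun t => erased t + kept t.
  by apply/funext => -[|t] /=; rewrite ?addr0 ?add0r.
rewrite esumrD // (esumr_reindex (e := succn) (h := kept)); last 2 first.
- exact: succn_inj.
- by move=> [|t] // Nt; case: Nt; exists t.
rewrite /= esumrZ //; last by move=> t; exact: channel_ge0 k_channel a t.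
have -> : esumr erased = (1 - al)%:E.
  rewrite /esumr (_ : \esum_(t in _) _ = \esum_(t in [set 0%N]) (erased t)%:E).
    by rewrite esum_set1 // lee_fin.
  rewrite [RHS]esum_mkcond; apply: eq_esum => -[|t] _ /=; first by rewrite mem_set.
  by case: ifP.
by rewrite k_channel.2 mule1 -EFinD subrK.
Qed.

Variable r : A -> R.
Hypothesis r_gt0 : forall a, 0 < r a.
Hypothesis r_sum1 : \sum_a r a = 1.

Lemma chan_out_erasure0 : chan_out (erasure al k) r 0 = 1 - al.
Proof. by rewrite /chan_out /= -mulr_sumr r_sum1 mulr1. Qed.

Lemma chan_out_erasureS t : chan_out (erasure al k) r t.+1 = al * chan_out k r t.
Proof. by rewrite /chan_out mulr_sumr; apply: eq_bigr => a _; rewrite mulrA. Qed.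

Lemma mi_chanr_erasure : mi_chanr r (erasure al k) = al * mi_chanr r k.
Proof.
rewrite /mi_chanr (tsum_reindex (e := fun z : A * nat => (z.1, z.2.+1))).
- rewrite -tsumZ; last exact: summabler_mi_summand.
  apply: eq_tsum => -[a t]; rewrite /mi_summand /= chan_out_erasureS.
  by rewrite (mulrCA (r a) al) (mulrCA (r a) al (chan_out k r t)) (xlnx_div_scale al).
- by move=> [a t] [a' t'] /= [-> ->].
- move=> [a [|t]] Nat; last by case: Nat; exists (a, t).
  by rewrite /mi_summand /= chan_out_erasure0 xlnx_divxx.
Qed.

End Erasure.

Section ErasureSplit.
Variables (R : realType) (X Y : finType) (p : X * Y -> R).
Variables (kX : X -> nat -> R) (kY : Y -> nat -> R) (al be : R).
Hypothesis p_sum1 : \sum_xy p xy = 1.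

Local Notation qX := (chan_out kX (margX p)).
Local Notation qY := (chan_out kY (margY p)).
Local Notation qT := (chan_out (ktensor kX kY) p).
Local Notation qT' := (chan_out (ktensor (erasure al kX) (erasure be kY)) p).

Lemma chan_out_erasure00 : qT' (0, 0)%N = (1 - al) * (1 - be).
Proof. by rewrite /chan_out /ktensor /= -mulr_sumr p_sum1 mulr1. Qed.

Lemma chan_out_erasure0S j : qT' (0, j.+1)%N = (1 - al) * (be * qY j).
Proof.
rewrite /chan_out /ktensor /=; under [in RHS]eq_bigr do rewrite mulrC.
by rewrite -sum_margYE !mulr_sumr; apply: eq_bigr => xy _; ring.
Qed.

Lemma chan_out_erasureS0 i : qT' (i.+1, 0)%N = (al * qX i) * (1 - be).
Proof.
rewrite /chan_out /ktensor /=; under [in RHS]eq_bigr do rewrite mulrC.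
by rewrite -sum_margXE mulr_sumr mulr_suml; apply: eq_bigr => xy _; ring.
Qed.

Lemma chan_out_erasureSS i j : qT' (i.+1, j.+1) = (al * be) * qT (i, j).
Proof. by rewrite /chan_out /ktensor /= mulr_sumr; apply: eq_bigr => xy _; ring. Qed.

Hypothesis p_gt0 : forall xy, 0 < p xy.
Hypotheses (kX_channel : channel kX) (kY_channel : channel kY).

Lemma mi_TTr_erasure :
  mi_TTr p (erasure al kX) (erasure be kY) = al * be * mi_TTr p kX kY.
Proof.
have qX'0 := chan_out_erasure0 al kX (sum_margX p_sum1).
have qY'0 := chan_out_erasure0 be kY (sum_margY p_sum1).
rewrite /mi_TTr (tsum_reindex (e := fun t : nat * nat => (t.1.+1, t.2.+1))).
- rewrite -tsumZ; last exact: summabler_mi_TT_summand.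
  apply: eq_tsum => -[i j]; rewrite /mi_TT_summand /= chan_out_erasureSS.
  by rewrite !chan_out_erasureS (mulrACA al) (xlnx_div_scale (al * be)).
- by move=> [i j] [i' j'] /= [-> ->].
- move=> [[|i] [|j]] Nij; rewrite /mi_TT_summand /=.
  + by rewrite chan_out_erasure00 qX'0 qY'0 xlnx_divxx.
  + by rewrite chan_out_erasure0S qX'0 chan_out_erasureS xlnx_divxx.
  + by rewrite chan_out_erasureS0 qY'0 chan_out_erasureS xlnx_divxx.
  + by case: Nij; exists (i, j).
Qed.

End ErasureSplit.

(** * The problems (A) and (S) *)

Section Argmin.
Variables (R : realType) (P : Type).

Lemma is_argmin_equiv (F G : P -> Prop) (o1 o2 : P -> \bar R) :
  (forall z, F z <-> G z) ->
  (forall z w, F z -> F w -> (o1 z <= o1 w)%E = (o2 z <= o2 w)%E) ->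
  forall z, is_argmin F o1 z <-> is_argmin G o2 z.
Proof.
move=> FG o12 z; split=> [[Fz min_z]|[/FG Fz min_z]].
- by split=> [|w /FG Fw]; [exact/FG | rewrite -o12 //; exact: min_z].
- by split=> // w Fw; rewrite o12 //; apply: min_z; exact/FG.
Qed.

Lemma is_argmin_restrict (Fge Feq : P -> Prop) (obj : P -> \bar R) :
  (forall z, Feq z -> Fge z) ->
  (forall z, Fge z -> exists2 z', Feq z' &
     (obj z' <= obj z)%E /\ (~ Feq z -> (obj z' < obj z)%E)) ->
  forall z, is_argmin Fge obj z <-> is_argmin Feq obj z.
Proof.
move=> Feq_ge improve z; split=> [[Fz min_z]|[Fz min_z]].
- split=> [|w /Feq_ge]; last exact: min_z.
  have [//|nFz] := pselect (Feq z).
  have [z' Fz' [_ /(_ nFz)]] := improve z Fz.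
  by rewrite ltNge (min_z z' (Feq_ge _ Fz')).
- split=> [|w Fw]; first exact: Feq_ge.
  have [w' Fw' [le_w' _]] := improve w Fw.
  exact: le_trans (min_z w' Fw') le_w'.
Qed.

End Argmin.

Section SplitProblems.
Variables (R : realType) (X Y : finType) (p : X * Y -> R).
Hypothesis p_gt0 : forall xy, 0 < p xy.
Hypothesis p_sum1 : \sum_xy p xy = 1.

Definition split_channel (k : chpair R X Y) : Prop := channel k.1 /\ channel k.2.

Local Notation mi_sum k := (mi_chanr (margX p) k.1 + mi_chanr (margY p) k.2).
Local Notation mi_out k := (mi_TTr p k.1 k.2).

Let pX_gt0 := margX_gt0 p_gt0 p_sum1.
Let pY_gt0 := margY_gt0 p_gt0 p_sum1.

Lemma objS_fin k : split_channel k -> objS p k = (mi_sum k)%:E.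
Proof. by move=> [kX kY]; rewrite /objS (mi_chan_fin kX pX_gt0) (mi_chan_fin kY pY_gt0). Qed.

Lemma objA_fin k : split_channel k -> objA p k = (mi_sum k - mi_out k)%:E.
Proof.
move=> [kX kY].
by rewrite /objA (mi_chan_fin (channel_ktensor kX kY) p_gt0) mi_chanr_ktensor.
Qed.

Lemma mi_out_le k : split_channel k -> mi_out k <= mi_sum k.
Proof. by case=> kX kY; exact: mi_TTr_le. Qed.

Lemma feasS_geE lam k : feasS_ge p lam k <-> split_channel k /\ lam <= mi_out k.
Proof.
split=> [[kX [kY]]|[[kX kY] lam_le]]; first by rewrite mi_TT_fin // lee_fin.
by do 2!split=> //; rewrite mi_TT_fin // lee_fin.
Qed.

Lemma feasS_eqE lam k : feasS_eq p lam k <-> split_channel k /\ mi_out k = lam.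
Proof.
split=> [[kX [kY]]|[[kX kY] out_k]]; first by rewrite mi_TT_fin // => -[].
by do 2!split=> //; rewrite mi_TT_fin // out_k.
Qed.

Lemma feasA_feasS_eq lam k : feasA p lam k <-> feasS_eq p lam k.
Proof.
rewrite /feasA /feasS_eq /kl /mi_TT.
by under eq_fun do rewrite chan_out_ktensor_prodmarg.
Qed.

Lemma erasure_reaches_mi_out k (lam : R) : split_channel k ->
  0 <= lam <= mi_out k ->
  exists2 k', split_channel k' /\ mi_out k' = lam &
    mi_sum k' <= mi_sum k /\ (lam < mi_out k -> mi_sum k' < mi_sum k).
Proof.
move=> [kX kY] /andP[lam_ge0 lam_le].
have [out_eq|out_neq] := eqVneq (mi_out k) lam.
  by exists k; split => //; rewrite out_eq ltxx.
have lam_lt : lam < mi_out k by rewrite lt_neqAle eq_sym out_neq.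
have out_gt0 : 0 < mi_out k by apply: le_lt_trans lam_lt.
have sum_gt0 : 0 < mi_sum k by apply: lt_le_trans out_gt0 (mi_out_le (conj kX kY)).
pose al := Num.sqrt (lam / mi_out k).
have al_ge0 : 0 <= al by exact: sqrtr_ge0.
have alal : al * al = lam / mi_out k by rewrite -expr2 sqr_sqrtr // divr_ge0 // ltW.
have al_lt1 : al < 1.
  suff : al * al < 1 by nra.
  by rewrite alal ltr_pdivrMr // mul1r.
exists (erasure al k.1, erasure al k.2).
  split; first by split; apply: channel_erasure => //; exact: ltW.
  by rewrite /= mi_TTr_erasure // alal divfK // gt_eqF.
rewrite /= (mi_chanr_erasure al kX pX_gt0 (sum_margX p_sum1)).
rewrite (mi_chanr_erasure al kY pY_gt0 (sum_margY p_sum1)) -mulrDr.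
by split=> [|_]; [rewrite ler_piMl // ltW | rewrite gtr_pMl].
Qed.

Lemma argmin_feasS_ge_eq lam : 0 <= lam -> forall k,
  is_argmin (feasS_ge p lam) (@objS R X Y p) k <->
  is_argmin (feasS_eq p lam) (@objS R X Y p) k.
Proof.
move=> lam_ge0; apply: is_argmin_restrict => [k /feasS_eqE [k_split <-]|k].
  exact/feasS_geE.
move=> /feasS_geE [k_split lam_le].
have lam_in : 0 <= lam <= mi_out k by rewrite lam_ge0.
have [k' [k'_split out_k'] [le_sum lt_sum]] := erasure_reaches_mi_out k_split lam_in.
exists k'; first exact/feasS_eqE.
rewrite !objS_fin // lte_fin lee_fin; split => // Nk; apply: lt_sum.
rewrite lt_neqAle lam_le andbT; apply/eqP => lam_eq; apply: Nk.
by apply/feasS_eqE; split; rewrite ?lam_eq.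
Qed.

Lemma argmin_feasA_feasS_eq lam : forall k,
  is_argmin (feasA p lam) (@objA R X Y p) k <->
  is_argmin (feasS_eq p lam) (@objS R X Y p) k.
Proof.
apply: is_argmin_equiv => [k|k w]; first exact: feasA_feasS_eq.
move=> /feasA_feasS_eq/feasS_eqE [k_split out_k] /feasA_feasS_eq/feasS_eqE [w_split out_w].
by rewrite !objA_fin // !objS_fin // !lee_fin out_k out_w lerD2r.
Qed.

End SplitProblems.

Theorem proposition6 (R : realType) (X Y : finType) (p : X * Y -> R) (lam : R) :
  (forall xy, 0 < p xy) ->
  \sum_(xy : X * Y) p xy = 1 ->
  0 <= lam -> lam <= mutinf p ->
  (forall k : chpair R X Y,
     is_argmin (feasS_ge p lam) (@objS R X Y p) k <->
     is_argmin (feasS_eq p lam) (@objS R X Y p) k) /\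
  (forall k : chpair R X Y,
     is_argmin (feasA p lam) (@objA R X Y p) k <->
     is_argmin (feasS_ge p lam) (@objS R X Y p) k).
Proof.
(* [lam <= mutinf p] only makes the problems feasible (identity channels attain it). *)
move=> p_gt0 p_sum1 lam_ge0 _.
have ge_eq := argmin_feasS_ge_eq p_gt0 p_sum1 lam_ge0.
split=> // k; rewrite ge_eq; exact: argmin_feasA_feasS_eq.
Qed.
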